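(* Let $\{a_n\}_{n=1}^\infty\subset(0,1]$ and define $P_n,Q_n:\{-1,1\}^n\to\mathbb{R}$ by $P_0\equiv Q_0\equiv 1$ and \[ P_{n+1}=P_n+\varepsilon_{n+1}a_{n+1}Q_n,\qquad Q_{n+1}=\varepsilon_{n+1}a_{n+1}P_n-Q_n,\qquad n=0,1,\dots \] Then for all $n=1,2,\dots$, the function $|P_n|^2+|Q_n|^2$ is constant, with \[ |P_n|^2+|Q_n|^2\equiv 2\prod_{i=1}^n(1+a_i^2), \] \[ \|P_n\|_2=\|Q_n\|_2=\prod_{i=1}^n(1+a_i^2)^{1/2}, \] \[ \prod_{i=1}^n(1+a_i^2)^{1/2}\le\|P_n\|_\infty,\ \|Q_n\|_\infty\le\sqrt{2}\prod_{i=1}^n(1+a_i^2)^{1/2}, \] and for each $A\subseteq[n]$, \[ \hat P_n(A)^2=\hat Q_n(A)^2=\prod_{i\in A}a_i^2. \]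
   Context: Equip $\{-1,1\}^n$ with the uniform probability measure; $\|g\|_2^2=2^{-n}\sum_{\delta}|g(\delta)|^2$ and $\|g\|_\infty=\max_\delta|g(\delta)|$. Here $\varepsilon_i$ denotes the $i$-th coordinate function $\varepsilon_i(\delta_1,\dots,\delta_m)=\delta_i$ (a function on $\{-1,1\}^m$ for any $m\ge i$; functions on $\{-1,1\}^n$ are regarded as functions on $\{-1,1\}^{n+1}$ not depending on the last coordinate). For $A\subseteq[n]=\{1,\dots,n\}$, $W_A=\prod_{i\in A}\varepsilon_i$ and $\hat g(A)=2^{-n}\sum_{\delta\in\{-1,1\}^n}g(\delta)W_A(\delta)$. *)

From mathcomp Require Import all_boot all_order all_algebra.
Set Implicit Arguments. Unset Strict Implicit. Unset Printing Implicit Defensive.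
Import Order.TTheory GRing.Theory Num.Theory.
Local Open Scope ring_scope.

(* A point delta of {-1,1}^n is encoded as d : {ffun 'I_n -> bool};
   coordinate i (1 <= i <= n, paper indexing) is d (i-1), with
   true <-> -1 and false <-> +1. *)
Definition cube (n : nat) := {ffun 'I_n -> bool}.

Definition sgn {R : rcfType} (b : bool) : R := if b then -1 else 1.

(* extension of d to an infinite sequence of coordinates indexed from 1
   (coordinates > n set to +1; P_n, Q_n never look at them) *)
Definition ext (n : nat) (d : cube n) : nat -> bool :=
  fun i => match i with
           | 0 => false
           | k.+1 => if (insub k : option 'I_n) is Some j then d j else false
           end.

Fixpoint PQ {R : rcfType} (a : nat -> R) (n : nat) (e : nat -> bool) : R * R :=
  match n with
  | 0 => (1, 1)
  | m.+1 => let p := (PQ a m e).1 in let q := (PQ a m e).2 in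
            (p + sgn (e m.+1) * a m.+1 * q, sgn (e m.+1) * a m.+1 * p - q)
  end.

Definition P {R : rcfType} (a : nat -> R) (n : nat) (d : cube n) : R := (PQ a n (ext d)).1.
Definition Q {R : rcfType} (a : nat -> R) (n : nat) (d : cube n) : R := (PQ a n (ext d)).2.

Definition norm2 {R : rcfType} (n : nat) (g : cube n -> R) : R :=
  Num.sqrt ((2 ^+ n)^-1 * \sum_(d : cube n) `|g d| ^+ 2).

Definition norminf {R : rcfType} (n : nat) (g : cube n -> R) : R :=
  \big[Num.max/0]_(d : cube n) `|g d|.

(* Walsh function W_A = prod_{i in A} eps_i (A given as a subset of 'I_n,
   i.e. paper index i+1) *)
Definition walsh {R : rcfType} (n : nat) (A : {set 'I_n}) (d : cube n) : R :=
  \prod_(i in A) sgn (d i).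

Definition fourier {R : rcfType} (n : nat) (g : cube n -> R) (A : {set 'I_n}) : R :=
  (2 ^+ n)^-1 * \sum_(d : cube n) g d * walsh A d.

From mathcomp Require Import all_boot all_order all_algebra.
From mathcomp Require Import ring zify.
Import Order.TTheory GRing.Theory Num.Theory.
Set Implicit Arguments. Unset Strict Implicit. Unset Printing Implicit Defensive.
Local Open Scope ring_scope.

(* Adjoining a coordinate eps = eps_{n+1} maps (P, Q) to M (P, Q) with
   M = [[1, eps a], [eps a, -1]], whose columns are orthogonal of squared
   length 1 + a^2.  Hence P^2 + Q^2 is multiplied by 1 + a^2 pointwise, and,
   the cross terms cancelling when summing over eps, so are the means of P^2
   and of Q^2.  The L^2 norms are therefore sqrt T with T = prod (1 + a_i^2);
   they bound the sup norms from below, and P^2, Q^2 <= P^2 + Q^2 = 2T bounds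
   them from above.  Averaging over eps also shows that the coefficient of
   P_{n+1} at A is that of P_n at A, or a_{n+1} times that of Q_n at
   A \ {n+1}, according as n+1 is not or is in A; similarly for Q_{n+1}. *)

Definition cube_rcons n (d : cube n) (b : bool) : cube n.+1 :=
  [ffun i => if unlift ord_max i is Some j then d j else b].

Definition cube_init n (d : cube n.+1) : cube n := [ffun j => d (lift ord_max j)].

Lemma cube_rconsK n b : cancel (@cube_rcons n ^~ b) (@cube_init n).
Proof. by move=> d; apply/ffunP => j; rewrite !ffunE liftK. Qed.

Lemma cube_rcons_last n (d : cube n) b : cube_rcons d b ord_max = b.
Proof. by rewrite ffunE unlift_none. Qed.

Lemma cube_initK n (d : cube n.+1) : cube_rcons (cube_init d) (d ord_max) = d.
Proof.
apply/ffunP => i; rewrite !ffunE.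
by case: unliftP => [j ->|->]; rewrite ?ffunE.
Qed.

Lemma sum_cube0 (V : nmodType) (F : cube 0 -> V) : \sum_(d : cube 0) F d = F [ffun=> false].
Proof. by rewrite (big_pred1 [ffun=> false]) // => d; symmetry; apply/eqP/ffunP => -[]. Qed.

Lemma sum_cube_rcons (V : nmodType) n (F : cube n.+1 -> V) :
  \sum_(d : cube n.+1) F d =
    \sum_(d : cube n) (F (cube_rcons d true) + F (cube_rcons d false)).
Proof.
rewrite (reindex (fun p : cube n * bool => cube_rcons p.1 p.2)) /=.
  rewrite -(pair_big predT predT (fun d b => F (cube_rcons d b))) /=.
  by apply: eq_bigr => d _; rewrite big_bool.
exists (fun d => (cube_init d, d ord_max)) => [[d b] _ | d _] /=.
  by rewrite cube_rconsK cube_rcons_last.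
exact: cube_initK.
Qed.

Lemma ext_cube_rcons n (d : cube n) b i :
  ext (cube_rcons d b) i = if i == n.+1 then b else ext d i.
Proof.
case: i => [|k] //=; rewrite eqSS.
case: (ltngtP k n) => [lt_kn | lt_nk | ->].
- have lt_kn1 : (k < n.+1)%N by lia.
  rewrite (insubT (fun x => x < n.+1)%N lt_kn1) (insubT (fun x => x < n)%N lt_kn) /= ffunE.
  have -> : Sub k lt_kn1 = lift ord_max (Ordinal lt_kn) :> 'I_n.+1.
    by apply: val_inj; rewrite /= /bump leqNgt lt_kn.
  by rewrite liftK.
- by rewrite !insubF //; apply/negbTE; rewrite -leqNgt; lia.
- rewrite (insubT (fun x => x < n.+1)%N (ltnSn n)) /=.
  have -> : Sub n (ltnSn n) = ord_max :> 'I_n.+1 by apply: val_inj.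
  by rewrite cube_rcons_last.
Qed.

Definition set_init n (A : {set 'I_n.+1}) : {set 'I_n} := [set j | lift ord_max j \in A].

Lemma prod_set_init (V : comPzSemiRingType) n (A : {set 'I_n.+1}) (F : 'I_n.+1 -> V) :
  \prod_(i in A) F i =
    \prod_(j in set_init A) F (lift ord_max j) * (if ord_max \in A then F ord_max else 1).
Proof.
rewrite big_mkcond big_ord_recr /= [in RHS]big_mkcond /=.
have lift_widen j : lift ord_max j = widen_ord (leqnSn n) j by apply: val_inj; apply: lift_max.
by congr (_ * _); apply: eq_bigr => j _; rewrite inE lift_widen.
Qed.

Section Recursion.

Variables (R : rcfType) (a : nat -> R).

Lemma eq_PQ m e e' : (forall i, (0 < i <= m)%N -> e i = e' i) -> PQ a m e = PQ a m e'.
Proof.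
elim: m => //= m IHm ee'.
have ee'_m i : (0 < i <= m)%N -> e i = e' i by move=> ?; apply: ee'; lia.
by rewrite (IHm ee'_m) ee' //; lia.
Qed.

Lemma PQ_cube_rcons n (d : cube n) b :
  PQ a n (ext (cube_rcons d b)) = PQ a n (ext d).
Proof.
by apply: eq_PQ => i le_in; rewrite ext_cube_rcons ifN //; apply/eqP; lia.
Qed.

Lemma P_cube_rcons n (d : cube n) b :
  P a (cube_rcons d b) = P a d + sgn b * a n.+1 * Q a d.
Proof.
by move: (ext_cube_rcons d b n.+1); rewrite eqxx /P /Q /= PQ_cube_rcons => ->.
Qed.

Lemma Q_cube_rcons n (d : cube n) b :
  Q a (cube_rcons d b) = sgn b * a n.+1 * P a d - Q a d.
Proof.
by move: (ext_cube_rcons d b n.+1); rewrite eqxx /P /Q /= PQ_cube_rcons => ->.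
Qed.

Lemma sqr_PQ m e :
  (PQ a m e).1 ^+ 2 + (PQ a m e).2 ^+ 2 = 2 * \prod_(1 <= i < m.+1) (1 + a i ^+ 2).
Proof.
elim: m => [|m IHm] /=; first by rewrite big_geq //; ring.
rewrite big_nat_recr //= mulrA -IHm.
by case: (e m.+1); rewrite /sgn; ring.
Qed.

Lemma sum_sqr_P_Q n :
  \sum_(d : cube n) P a d ^+ 2 = 2 ^+ n * \prod_(1 <= i < n.+1) (1 + a i ^+ 2) /\
  \sum_(d : cube n) Q a d ^+ 2 = 2 ^+ n * \prod_(1 <= i < n.+1) (1 + a i ^+ 2).
Proof.
elim: n => [|n [IHP IHQ]].
  by rewrite big_geq // !sum_cube0.
rewrite big_nat_recr //= !sum_cube_rcons exprS.
set T := \prod_(1 <= i < n.+1) _ in IHP IHQ *.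
split.
- transitivity (\sum_(d : cube n) (2 * P a d ^+ 2 + 2 * a n.+1 ^+ 2 * Q a d ^+ 2)).
    by apply: eq_bigr => d _; rewrite !P_cube_rcons /sgn /=; ring.
  by rewrite big_split /= -!mulr_sumr IHP IHQ; ring.
- transitivity (\sum_(d : cube n) (2 * a n.+1 ^+ 2 * P a d ^+ 2 + 2 * Q a d ^+ 2)).
    by apply: eq_bigr => d _; rewrite !Q_cube_rcons /sgn /=; ring.
  by rewrite big_split /= -!mulr_sumr IHP IHQ; ring.
Qed.

Lemma walsh_cube_rcons n (A : {set 'I_n.+1}) d b :
  walsh A (cube_rcons d b) = walsh (set_init A) d * (if ord_max \in A then sgn b else 1) :> R.
Proof.
rewrite /walsh prod_set_init cube_rcons_last.
by congr (_ * _); apply: eq_bigr => j _; rewrite ffunE liftK.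
Qed.

Lemma fourier_P_cube_rcons n (A : {set 'I_n.+1}) :
  fourier (P a (n:=n.+1)) A = if ord_max \in A then a n.+1 * fourier (Q a (n:=n)) (set_init A)
                              else fourier (P a (n:=n)) (set_init A).
Proof.
rewrite /fourier sum_cube_rcons exprSr invfM -mulrA; case: ifP => A_last.
- rewrite (eq_bigr (fun d => 2 * (a n.+1 * (Q a d * walsh (set_init A) d)))) => [|d _].
    by rewrite -mulr_sumr mulKf ?pnatr_eq0 // -mulr_sumr mulrCA.
  by rewrite !walsh_cube_rcons A_last !P_cube_rcons /sgn /=; ring.
- rewrite (eq_bigr (fun d => 2 * (P a d * walsh (set_init A) d))) => [|d _].
    by rewrite -mulr_sumr mulKf ?pnatr_eq0.
  by rewrite !walsh_cube_rcons A_last !P_cube_rcons /sgn /=; ring.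
Qed.

Lemma fourier_Q_cube_rcons n (A : {set 'I_n.+1}) :
  fourier (Q a (n:=n.+1)) A = if ord_max \in A then a n.+1 * fourier (P a (n:=n)) (set_init A)
                              else - fourier (Q a (n:=n)) (set_init A).
Proof.
rewrite /fourier sum_cube_rcons exprSr invfM -mulrA; case: ifP => A_last.
- rewrite (eq_bigr (fun d => 2 * (a n.+1 * (P a d * walsh (set_init A) d)))) => [|d _].
    by rewrite -mulr_sumr mulKf ?pnatr_eq0 // -mulr_sumr mulrCA.
  by rewrite !walsh_cube_rcons A_last !Q_cube_rcons /sgn /=; ring.
- rewrite (eq_bigr (fun d => 2 * - (Q a d * walsh (set_init A) d))) => [|d _].
    by rewrite -mulr_sumr mulKf ?pnatr_eq0 // sumrN mulrN.
  by rewrite !walsh_cube_rcons A_last !Q_cube_rcons /sgn /=; ring.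
Qed.

Lemma sqr_fourier_P_Q n (A : {set 'I_n}) :
  fourier (P a (n:=n)) A ^+ 2 = \prod_(i in A) a i.+1 ^+ 2 /\
  fourier (Q a (n:=n)) A ^+ 2 = \prod_(i in A) a i.+1 ^+ 2.
Proof.
elim: n A => [|n IHn] A.
  have -> : A = set0 by apply/setP => -[].
  by rewrite /fourier /walsh !sum_cube0 !big_set0 /P /Q /= expr0 invr1; split; ring.
have [IHP IHQ] := IHn (set_init A).
rewrite fourier_P_cube_rcons fourier_Q_cube_rcons prod_set_init.
under [\prod_(j in set_init A) _]eq_bigr do rewrite lift_max.
case: ifP => _; rewrite ?sqrrN ?[(a _ * _) ^+ 2]exprMn IHP IHQ ?mulr1 //.
by split; apply: mulrC.
Qed.

End Recursion.

Lemma sqrtr_prod (R : rcfType) (I : Type) (r : seq I) (S : pred I) (F : I -> R) :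
  (forall i, S i -> 0 <= F i) ->
  Num.sqrt (\prod_(i <- r | S i) F i) = \prod_(i <- r | S i) Num.sqrt (F i).
Proof.
move=> F_ge0; elim/big_rec2: _ => [|i x y Si <-]; first exact: sqrtr1.
by rewrite sqrtrM ?F_ge0.
Qed.

Section Norms.

Variables (R : rcfType) (n : nat).
Implicit Type g : cube n -> R.

Lemma norm_le_norminf g d : `|g d| <= norminf g.
Proof. exact: (le_bigmax _ (fun d => `|g d|)). Qed.

Lemma norminf_le g c : 0 <= c -> (forall d, `|g d| <= c) -> norminf g <= c.
Proof. by move=> c_ge0 g_le; apply: bigmax_le. Qed.

Lemma norm2_le_norminf g : norm2 g <= norminf g.
Proof.
have g_le := norm_le_norminf g.
have M_ge0 : 0 <= norminf g := le_trans (normr_ge0 _) (g_le [ffun=> false]).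
rewrite /norm2 -(ger0_norm M_ge0) -sqrtr_sqr ler_sqrt ?sqr_ge0 //.
rewrite ler_pdivrMl ?exprn_gt0 //.
apply: (@le_trans _ _ (\sum_(d : cube n) norminf g ^+ 2)).
  by apply: ler_sum => d _; rewrite lerXn2r ?nnegrE.
by rewrite sumr_const card_ffun card_bool card_ord -[X in X <= _]mulr_natl natrX.
Qed.

End Norms.

Theorem proposition1 (R : rcfType) (a : nat -> R)
    (ha : forall i : nat, (1 <= i)%N -> 0 < a i <= 1) (n : nat) (hn : (1 <= n)%N) :
  [/\ forall d : cube n,
        `|P a d| ^+ 2 + `|Q a d| ^+ 2 = 2 * \prod_(1 <= i < n.+1) (1 + a i ^+ 2),
      norm2 (P a (n:=n)) = \prod_(1 <= i < n.+1) Num.sqrt (1 + a i ^+ 2) /\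
      norm2 (Q a (n:=n)) = \prod_(1 <= i < n.+1) Num.sqrt (1 + a i ^+ 2),
      (\prod_(1 <= i < n.+1) Num.sqrt (1 + a i ^+ 2) <= norminf (P a (n:=n))
        <= Num.sqrt 2 * \prod_(1 <= i < n.+1) Num.sqrt (1 + a i ^+ 2)) /\
      (\prod_(1 <= i < n.+1) Num.sqrt (1 + a i ^+ 2) <= norminf (Q a (n:=n))
        <= Num.sqrt 2 * \prod_(1 <= i < n.+1) Num.sqrt (1 + a i ^+ 2))
    & forall A : {set 'I_n},
        fourier (P a (n:=n)) A ^+ 2 = \prod_(i in A) a (i.+1) ^+ 2 /\
        fourier (Q a (n:=n)) A ^+ 2 = \prod_(i in A) a (i.+1) ^+ 2].
Proof.
have factor_ge0 i : true -> 0 <= 1 + a i ^+ 2 by rewrite addr_ge0 ?sqr_ge0.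
have [sumP sumQ] := sum_sqr_P_Q a n.
rewrite -sqrtr_prod //; set T := \prod_(1 <= i < n.+1) _ in sumP sumQ *.
have sqr_sum d : P a d ^+ 2 + Q a d ^+ 2 = 2 * T := sqr_PQ a n (ext d).
have norm2_eq (g : cube n -> R) : \sum_d g d ^+ 2 = 2 ^+ n * T -> norm2 g = Num.sqrt T.
  move=> sum_g; rewrite /norm2.
  under eq_bigr do rewrite (real_normK (num_real _)).
  by rewrite sum_g mulKf // expf_neq0 // pnatr_eq0.
have norminf_bounds (g : cube n -> R) :
    norm2 g = Num.sqrt T -> (forall d, g d ^+ 2 <= 2 * T) ->
    Num.sqrt T <= norminf g <= Num.sqrt 2 * Num.sqrt T.
  move=> norm2_g g_le; rewrite -{1}norm2_g norm2_le_norminf /=.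
  apply: norminf_le => [|d]; first by rewrite mulr_ge0 ?sqrtr_ge0.
  by rewrite -sqrtrM // -sqrtr_sqr ler_sqrt ?g_le // mulr_ge0 // prodr_ge0.
split.
- by move=> d; rewrite !real_normK ?num_real.
- by split; apply: norm2_eq.
- split; apply: norminf_bounds; rewrite ?norm2_eq // => d; rewrite -(sqr_sum d).
    by rewrite lerDl sqr_ge0.
  by rewrite lerDr sqr_ge0.
- exact: sqr_fourier_P_Q.
Qed.
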